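(* Let $(x_i,y_i)_{i=1}^7$ be point pairs in $\mathbb P^2\times\mathbb P^2$ and suppose there is an invertible projective transformation $H$ of $\mathbb P^2$ with $Hx_i=y_i$ for all $i$. Then the $7\times 9$ matrix $Z$ with rows $x_i^\top\otimes y_i^\top$ is rank deficient.
   Context: Work over $\mathbb C$; $x^\top\otimes y^\top$ denotes the Kronecker product, and equality $Hx_i=y_i$ is in projective space. *)

From HB Require Import structures.
From mathcomp Require Import all_boot all_order all_algebra.
From mathcomp Require Import complex.
From mathcomp Require Import reals.
Set Implicit Arguments. Unset Strict Implicit. Unset Printing Implicit Defensive.
Import Order.TTheory GRing.Theory Num.Theory.
Local Open Scope ring_scope.

(* Kronecker product of two row vectors: (u ⊗ v)_(a*n + b) = u_a * v_b.
   mxvec flattens a matrix in row-major order, with index a*n+b for entry (a,b). *)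
Definition kron_rV (F : nzRingType) (m n : nat) (u : 'rV[F]_m) (v : 'rV[F]_n)
  : 'rV[F]_(m * n) := mxvec (u^T *m v).

Definition Zmat (F : nzRingType) (x y : 'I_7 -> 'cV[F]_3) : 'M[F]_(7, 3 * 3) :=
  \matrix_(i < 7) kron_rV (x i)^T (y i)^T.

(* Equality H x = y in projective space P^2 for nonzero representatives. *)
Definition proj_eq (F : fieldType) (u v : 'cV[F]_3) : Prop :=
  exists2 lam : F, lam != 0 & u = lam *: v.

From mathcomp Require Import all_boot all_order all_algebra.
From mathcomp Require Import complex.
From mathcomp Require Import reals.
Set Implicit Arguments. Unset Strict Implicit. Unset Printing Implicit Defensive.
Import Order.TTheory GRing.Theory Num.Theory.
Local Open Scope ring_scope.
Local Open Scope complex_scope.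

(* If H x ~ y then x y^T = c x x^T H^T, so every row vec (x_i y_i^T) of Z is
   of the form vec (N H^T) with N symmetric.  Symmetric 3 x 3 matrices span a
   space of dimension C(4, 2) = 6, hence rank Z <= 6 < 7. *)

Definition upper_pairs (n : nat) : pred ('I_n * 'I_n) :=
  [pred p : 'I_n * 'I_n | (p.1 <= p.2)%N].
Arguments upper_pairs : clear implicits.

Lemma card_upper_pairs n : #|upper_pairs n| = 'C(n.+1, 2).
Proof.
rewrite -sum1_card.
rewrite (eq_bigl (fun p : 'I_n * 'I_n => xpredT p.1 && (p.1 <= p.2)%N)) //.
rewrite -(pair_big_dep xpredT (fun a b : 'I_n => (a <= b)%N) (fun _ _ => 1%N)).
have inner (a : 'I_n) : (\sum_(b < n | a <= b) 1 = n - a)%N.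
  by rewrite -[RHS]muln1 -sum_nat_const_nat big_geq_mkord.
rewrite (eq_bigr _ (fun a _ => inner a)) (reindex_inj rev_ord_inj) /=.
rewrite (eq_bigr (fun a : 'I_n => a.+1)) => [|a _]; last first.
  by rewrite subKn // ltn_ord.
by rewrite -bin2_sum big_mkord big_ord_recl.
Qed.

Section SymmetricMatrices.
Variables (R : pzRingType) (n : nat).

Definition sym_delta_mx (p : 'I_n * 'I_n) : 'M[R]_n :=
  delta_mx p.1 p.2 + (p.1 != p.2)%:R *: delta_mx p.2 p.1.

Lemma sym_mx_expand (M : 'M[R]_n) : M^T = M ->
  \sum_(p in upper_pairs n) M p.1 p.2 *: sym_delta_mx p = M.
Proof.
move=> symM; apply/matrixP => a b.
have Mba : M b a = M a b by rewrite -{1}symM mxE.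
pose q := if (a <= b)%N then (a, b) else (b, a).
have Pq : q \in upper_pairs n.
  by rewrite /q unfold_in; case: (leqP a b) => [|/ltnW].
rewrite (bigD1 q) //= mxE summxE big1 ?addr0 => [|[c d] /andP[/= le_cd neq_q]].
  rewrite !mxE /q; case: leqP => ab /=; rewrite !eqxx /=.
    by case: eqVneq => [->|_]; rewrite ?mulr0 /= ?mul0r addr0 mulr1.
  have ba : (b == a) = false by apply/eqP => ba; rewrite ba ltnn in ab.
  by rewrite eq_sym ba /= add0r !mulr1 Mba.
rewrite unfold_in /= in le_cd; rewrite !mxE /=.
have not_at_cd : (a == c) && (b == d) = false.
  apply/andP => -[/eqP ac /eqP bd].
  by move: neq_q; rewrite /q ac bd le_cd eqxx.
have not_at_dc : (c != d) && ((a == d) && (b == c)) = false.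
  apply/and3P => -[cd /eqP ad /eqP bc].
  have dc : (d <= c)%N = false.
    by apply/negbTE; rewrite -ltnNge ltn_neqAle le_cd andbT.
  by move: neq_q; rewrite /q ad bc dc eqxx.
by rewrite not_at_cd add0r -natrM mulnb not_at_dc mulr0.
Qed.

End SymmetricMatrices.

Lemma mxrank_sym_rows (F : fieldType) n m (A : 'M[F]_(m, n * n)) (K : 'M[F]_n) :
  (forall i, exists2 N : 'M[F]_n, N^T = N & row i A = mxvec (N *m K)) ->
  (\rank A <= 'C(n.+1, 2))%N.
Proof.
move=> rowsA.
pose B := \matrix_(j < #|upper_pairs n|)
  mxvec (sym_delta_mx F (enum_val j) *m K).
have sAB : (A <= B)%MS.
  apply/row_subP => i; have [N symN ->] := rowsA i.
  rewrite -(sym_mx_expand symN) mulmx_suml linear_sum /=.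
  apply/summx_sub => p Pp; rewrite -scalemxAl linearZ /=; apply: scalemx_sub.
  by move: (row_sub (enum_rank_in Pp p) B); rewrite rowK enum_rankK_in.
by rewrite -card_upper_pairs (leq_trans (mxrankS sAB)) ?rank_leq_row.
Qed.

Lemma proj_eq_outer (F : fieldType) (H : 'M[F]_3) (u v : 'cV[F]_3) :
  proj_eq (H *m u) v -> exists2 N : 'M[F]_3, N^T = N & u *m v^T = N *m H^T.
Proof.
case=> lam lam0 Huv; exists (lam^-1 *: (u *m u^T)).
  by rewrite linearZ /= trmx_mul trmxK.
rewrite -scalemxAl -mulmxA -trmx_mul Huv linearZ /= -scalemxAr scalerA.
by rewrite mulVf // scale1r.
Qed.

Theorem mainTheorem18 (R : realType) (x y : 'I_7 -> 'cV[R[i]]_3)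
  (hx : forall i, x i != 0) (hy : forall i, y i != 0)
  (H : 'M[R[i]]_3) (hH : H \in unitmx)
  (hHxy : forall i, proj_eq (H *m x i) (y i)) :
  (\rank (Zmat x y) < 7)%N.
Proof.
apply: leq_ltn_trans (mxrank_sym_rows (K := H^T) _) _ => // i.
have [N symN outerN] := proj_eq_outer (hHxy i).
by exists N; rewrite // /Zmat rowK /kron_rV trmxK outerN.
Qed.
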